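(* Let $p$ be a prime. For each $p$-tuple $(m_1,\dots,m_p)$ of nonnegative integers with $m_1+\dots+m_p\le p-1$ there is an integer $c_{(m_1,\dots,m_p)}$ divisible by $p$ such that the following holds: for every associative ring $R$, every $r\in R$, every commutative subring $A\subseteq R$ with $\mathrm{ad}_r(A)\subseteq A$, and every $a\in A$, $$(ar)^{p-1}a-a^pr^{p-1}-\mathrm{ad}_{ar}^{\,p-1}(a)=\sum_{(m_1,\dots,m_p)}c_{(m_1,\dots,m_p)}\,\mathrm{ad}_r^{m_1}(a)\,\mathrm{ad}_r^{m_2}(a)\cdots\mathrm{ad}_r^{m_p}(a)\,r^{\,p-1-m_1-\dots-m_p}.$$ In other words, this expression is a noncommutative polynomial in $r$ and $a,\mathrm{ad}_r(a),\mathrm{ad}_r^2(a),\dots$ all of whose coefficients are divisible by $p$.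
   Context: For $s\in R$, $\mathrm{ad}_s:R\to R$ is the map $x\mapsto sx-xs$, and $\mathrm{ad}_s^k$ denotes its $k$-fold iterate ($\mathrm{ad}_s^0$ is the identity). No assumption on the characteristic of $R$ is made. *)

From HB Require Import structures.
From mathcomp Require Import all_boot all_order all_algebra.
Set Implicit Arguments. Unset Strict Implicit. Unset Printing Implicit Defensive.
Import Order.TTheory GRing.Theory Num.Theory.
Local Open Scope ring_scope.

Definition ad (R : pzRingType) (s : R) (x : R) : R := s * x - x * s.

Definition adn (R : pzRingType) (s : R) (k : nat) (x : R) : R := iter k (ad s) x.

From HB Require Import structures.
From mathcomp Require Import all_boot all_order all_algebra.
From mathcomp Require Import zify.
Set Implicit Arguments. Unset Strict Implicit. Unset Printing Implicit Defensive.
Import Order.TTheory GRing.Theory Num.Theory.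
Local Open Scope ring_scope.

(* Write p = n + 1 and move every r in (a r)^n a to the right through
   r x = x r + ad_r(x): then (a r)^n a = sum_j P_j r^j with P_n = a^p and,
   as a commutes with A, P_0 = ad_(ar)^n(a).  So the left-hand side is
   sum_(0<j<n) P_j r^j, and it suffices that each such P_j is p times an
   expression in a, ad_r^k(a) and r whose coefficients do not depend on R.
   Substitute r + X for r in R[X]: X is central and ad_(r+X) = ad_r on
   constants, so the P_j are unchanged.  The derivative of (a (r+X))^p is
   sum_k (ar)^(n-k) a (ar)^k, which is ad_(ar)^n(a), a constant, plus p times
   an expression, because (-1)^k C(p-1, k) = 1 (mod p).  Comparing the
   coefficients of X^i for 0 < i < n gives
   sum_(j>=i) (j+1) C(j, i) P_j r^(j-i) = 0 (mod p), a triangular system with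
   the units i+1 on its diagonal, which is solved from i = n-1 downwards. *)

(* A term [(z, [:: k_1; ...; k_d], e)] stands for
   [z * ad_r^k_1(a) * ... * ad_r^k_d(a) * r^e]; a formal expression is a list
   of terms, read as their sum.  Formal expressions give coefficients that do
   not depend on the ring. *)
Definition term := (int * seq nat * nat)%type.

Section Evaluation.
Variables (S : pzRingType) (r a : S).

Lemma ad0 : ad r 0 = 0.
Proof. by rewrite /ad mulr0 mul0r subrr. Qed.

Lemma ad1 : ad r 1 = 0.
Proof. by rewrite /ad mulr1 mul1r subrr. Qed.

Lemma adM x y : ad r (x * y) = ad r x * y + x * ad r y.
Proof. by rewrite /ad mulrBl mulrBr !mulrA addrA subrK. Qed.

Lemma mulr_adE x : r * x = x * r + ad r x.
Proof. by rewrite /ad addrC subrK. Qed.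

Lemma adnS k x : adn r k.+1 x = ad r (adn r k x).
Proof. by rewrite /adn iterS. Qed.

Definition admon (s : seq nat) : S := \prod_(k <- s) adn r k a.

Definition feval (L : seq term) : S :=
  \sum_(t <- L) (admon t.1.2 * r ^+ t.2) *~ t.1.1.

Lemma admon_nil : admon [::] = 1.
Proof. by rewrite /admon big_nil. Qed.

Lemma admon_cons k s : admon (k :: s) = adn r k a * admon s.
Proof. by rewrite /admon big_cons. Qed.

Fixpoint admon_ad (s : seq nat) : seq (seq nat) :=
  if s is k :: s' then (k.+1 :: s') :: map (cons k) (admon_ad s') else [::].

Lemma ad_admon s : ad r (admon s) = \sum_(s' <- admon_ad s) admon s'.
Proof.
elim: s => [|k s IHs] /=; first by rewrite admon_nil ad1 big_nil.
rewrite admon_cons adM IHs big_cons admon_cons -adnS big_map mulr_sumr.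
by congr (_ + _); apply: eq_bigr => s' _; rewrite admon_cons.
Qed.

Lemma feval_nil : feval [::] = 0.
Proof. by rewrite /feval big_nil. Qed.

Lemma feval_cat L1 L2 : feval (L1 ++ L2) = feval L1 + feval L2.
Proof. by rewrite /feval big_cat. Qed.

Lemma feval_flatten (LL : seq (seq term)) :
  feval (flatten LL) = \sum_(L <- LL) feval L.
Proof.
elim: LL => [|L LL IHLL]; first by rewrite big_nil feval_nil.
by rewrite /= feval_cat IHLL big_cons.
Qed.

Definition fone : seq term := [:: (1%:Z, [::], 0%N)].
Definition fmula (L : seq term) : seq term :=
  [seq (t.1.1, 0%N :: t.1.2, t.2) | t <- L].
Definition fmulr (L : seq term) : seq term :=
  flatten [seq (t.1.1, t.1.2, t.2.+1) :: [seq (t.1.1, s, t.2) | s <- admon_ad t.1.2]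
          | t <- L].
Definition fscale (z : int) (L : seq term) : seq term :=
  [seq (t.1.1 * z, t.1.2, t.2) | t <- L].
Definition fmulrX (k : nat) (L : seq term) : seq term :=
  [seq (t.1.1, t.1.2, (t.2 + k)%N) | t <- L].
Definition fad (L : seq term) : seq term := fmulr L ++ fscale (-1) (fmulrX 1 L).

Lemma feval_fone : feval fone = 1.
Proof. by rewrite /feval big_seq1 admon_nil mulr1 mulr1z. Qed.

Lemma feval_fmula L : feval (fmula L) = a * feval L.
Proof.
rewrite /feval big_map mulr_sumr; apply: eq_bigr => t _ /=.
by rewrite admon_cons mulrzAr mulrA.
Qed.

Lemma feval_fmulr L : feval (fmulr L) = r * feval L.
Proof.
rewrite /fmulr feval_flatten big_map /feval mulr_sumr; apply: eq_bigr => t _ /=.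
rewrite big_cons big_map mulrzAr mulrA mulr_adE mulrDl ad_admon mulr_suml mulrzDl.
by rewrite -mulrA -exprS mulrz_suml.
Qed.

Lemma feval_fscale z L : feval (fscale z L) = feval L *~ z.
Proof. by rewrite /feval big_map mulrz_suml; apply: eq_bigr => t _; rewrite mulrzA. Qed.

Lemma feval_fmulrX k L : feval (fmulrX k L) = feval L * r ^+ k.
Proof.
by rewrite /feval big_map mulr_suml; apply: eq_bigr => t _; rewrite mulrzAl exprD mulrA.
Qed.

Lemma feval_fad L : feval (fad L) = ad r (feval L).
Proof. by rewrite feval_cat feval_fmulr feval_fscale feval_fmulrX expr1 mulrN1z. Qed.

End Evaluation.

Definition homog (d w : nat) (t : term) : bool :=
  (size t.1.2 == d) && (sumn t.1.2 + t.2 == w)%N.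

Lemma all_flatten_homog d w (LL : seq (seq term)) :
  (forall L, L \in LL -> all (homog d w) L) -> all (homog d w) (flatten LL).
Proof. by move=> hLL; apply/allP => t /flattenP [L /hLL /allP]; apply. Qed.

Lemma admon_ad_shape s s' :
  s' \in admon_ad s -> size s' = size s /\ sumn s' = (sumn s).+1.
Proof.
elim: s s' => [|k s IHs] s' //=; rewrite inE => /orP [/eqP -> //|].
by case/mapP => s'' /IHs [hsz hsum] ->; rewrite /= hsz hsum addnS.
Qed.

Lemma homog_fone : all (homog 0 0) fone.
Proof. by []. Qed.

Lemma homog_fmula d w L : all (homog d w) L -> all (homog d.+1 w) (fmula L).
Proof. by move=> /allP hL; apply/allP => t /mapP [t' /hL] + ->. Qed.

Lemma homog_fmulr d w L : all (homog d w) L -> all (homog d w.+1) (fmulr L).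
Proof.
move=> /allP hL; apply: all_flatten_homog => _ /mapP [t /hL /andP [/eqP hd /eqP hw] ->].
apply/allP => t'; rewrite inE => /orP [/eqP -> | /mapP [s /admon_ad_shape [hs1 hs2] ->]].
  by rewrite /homog /= hd addnS hw !eqxx.
by rewrite /homog /= hs1 hs2 hd addSn hw !eqxx.
Qed.

Lemma homog_fscale d w z L : all (homog d w) L -> all (homog d w) (fscale z L).
Proof. by move=> /allP hL; apply/allP => t /mapP [t' /hL] + ->. Qed.

Lemma homog_fmulrX d w k L : all (homog d w) L -> all (homog d (w + k)) (fmulrX k L).
Proof.
move=> /allP hL; apply/allP => t /mapP [t' /hL /andP [hd /eqP hw] ->].
by rewrite /homog /= hd addnA hw eqxx.
Qed.

Lemma homog_fad d w L : all (homog d w) L -> all (homog d w.+1) (fad L).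
Proof.
move=> hL; rewrite all_cat homog_fmulr //= homog_fscale // -addn1.
exact: homog_fmulrX.
Qed.

(* [farcoef n j] is the coefficient of [r^j] in [(a r)^n a], once every [r]
   has been moved to the right through [r x = x r + ad_r(x)]. *)
Fixpoint farcoef (n j : nat) : seq term :=
  if n is n'.+1 then
    (if j is j'.+1 then fmula (farcoef n' j') else [::]) ++ fmula (fad (farcoef n' j))
  else if j == 0%N then fmula fone else [::].

Lemma farcoef_small n j : (n < j)%N -> farcoef n j = [::].
Proof. by elim: n j => [|n IHn] [|j] //= hj; rewrite !IHn // ltnW. Qed.

Lemma homog_farcoef n j : (j <= n)%N -> all (homog n.+1 (n - j)) (farcoef n j).
Proof.
elim: n j => [|n IHn] j /=; first by rewrite leqn0 => /eqP ->.
move=> hjn; rewrite all_cat; apply/andP; split.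
  by case: j hjn => [|j] hjn //; rewrite subSS homog_fmula ?IHn.
have [hj|hj] := leqP j n; last by rewrite farcoef_small.
by rewrite subSn // homog_fmula ?homog_fad ?IHn.
Qed.

Section ArCoefficients.
Variables (S : pzRingType) (r a : S).

Definition arcoef n j : S := feval r a (farcoef n j).

Lemma arcoef0 j : arcoef 0 j = if j == 0%N then a else 0.
Proof.
rewrite /arcoef /=; case: eqP => _; rewrite ?feval_nil //.
by rewrite /feval big_seq1 /= admon_cons admon_nil !mulr1 mulr1z.
Qed.

Lemma arcoefS n j :
  arcoef n.+1 j = (if j is j'.+1 then a * arcoef n j' else 0) + a * ad r (arcoef n j).
Proof.
rewrite /arcoef /= feval_cat feval_fmula feval_fad.
by case: j => [|j]; rewrite ?feval_nil ?feval_fmula.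
Qed.

Lemma arcoef_small n j : (n < j)%N -> arcoef n j = 0.
Proof. by move=> hnj; rewrite /arcoef farcoef_small ?feval_nil. Qed.

Lemma arcoef_diag n : arcoef n n = a ^+ n.+1.
Proof.
elim: n => [|n IHn]; first by rewrite arcoef0 expr1.
by rewrite arcoefS IHn arcoef_small // ad0 mulr0 addr0 -exprS.
Qed.

Lemma exp_mul_ar n : (a * r) ^+ n * a = \sum_(j < n.+1) arcoef n j * r ^+ j.
Proof.
elim: n => [|n IHn]; first by rewrite big_ord1 arcoef0 expr0 mul1r mulr1.
rewrite exprS -mulrA IHn -mulrA mulr_sumr.
under eq_bigr do rewrite mulrA (mulr_adE r) mulrDl -mulrA -exprS.
rewrite big_split /=.
under [RHS]eq_bigr do rewrite arcoefS mulrDl.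
rewrite big_split /= [X in _ = X + _]big_ord_recl /= mul0r add0r.
rewrite [X in _ = _ + X]big_ord_recr /= arcoef_small // ad0 mulr0 mul0r addr0.
by rewrite mulrDr !mulr_sumr; congr (_ + _); apply: eq_bigr => j _; rewrite mulrA.
Qed.

Lemma arcoef0_adn n :
  (forall m, GRing.comm a (adn (a * r) m a)) -> arcoef n 0 = adn (a * r) n a.
Proof.
move=> ha; elim: n => [|n IHn]; first by rewrite arcoef0.
by rewrite arcoefS add0r IHn adnS /ad mulrBr !mulrA (ha n).
Qed.

End ArCoefficients.

Lemma adn_binomial (S : pzRingType) (x y : S) n :
  adn x n y = \sum_(k < n.+1) (x ^+ (n - k) * y * x ^+ k) *~ ((-1) ^+ k * 'C(n, k)%:Z).
Proof.
elim: n => [|n IHn]; first by rewrite big_ord1 /= !expr0 mulr1 mul1r mulr1z.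
rewrite adnS IHn /ad mulr_sumr mulr_suml.
under eq_bigr do rewrite mulrzAr.
under [X in _ - X = _]eq_bigr do rewrite mulrzAl.
rewrite [RHS]big_ord_recl /= subn0 !expr0 mulr1 bin0 mulr1 mulr1z.
have -> : \sum_(i < n.+1) (x ^+ (n.+1 - bump 0 i) * y * x ^+ bump 0 i)
              *~ ((-1) ^+ bump 0 i * 'C(n.+1, bump 0 i)%:Z)
  = \sum_(i < n.+1) (x ^+ (n - i) * y * x ^+ i * x) *~ ((-1) ^+ i.+1 * 'C(n, i.+1)%:Z)
    - \sum_(i < n.+1) (x ^+ (n - i) * y * x ^+ i * x) *~ ((-1) ^+ i * 'C(n, i)%:Z).
  rewrite -sumrB; apply: eq_bigr => i _.
  rewrite /bump /= add1n subSS binS PoszD mulrDr mulrzDr.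
  rewrite -[x ^+ (n - i) * y * x ^+ i * x]mulrA -exprSr.
  by rewrite (exprS (-1 : int)) mulN1r !mulNr !mulrNz.
rewrite addrA; congr (_ - _).
rewrite big_ord_recl /= subn0 !expr0 bin0 mulr1 mulr1z mulrA -exprS; congr (_ + _).
rewrite [RHS]big_ord_recr /= bin_small // mulr0 mulr0z addr0.
apply: eq_bigr => i _; rewrite /bump /= add1n -!mulrA -exprSr mulrA -exprS.
by rewrite subnSK.
Qed.

Lemma prime_dvd_sign_bin p k :
  prime p -> (k < p)%N -> (p%:Z %| 1 - (-1) ^+ k * 'C(p.-1, k)%:Z)%Z.
Proof.
move=> hp; elim: k => [|k IHk] hk; first by rewrite expr0 bin0 mul1r subrr dvdz0.
have hpk : (p%:Z %| 'C(p, k.+1)%:Z)%Z by apply: (prime_dvd_bin hp); rewrite hk.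
have -> : 1 - (-1) ^+ k.+1 * 'C(p.-1, k.+1)%:Z
        = 1 - (-1) ^+ k * 'C(p.-1, k)%:Z + (-1) ^+ k * 'C(p, k.+1)%:Z.
  rewrite -(prednK (prime_gt0 hp)) binS /= PoszD exprS.
  by rewrite mulN1r mulNr opprK mulrDr (addrC (_ * 'C(_, k.+1)%:Z)) addrA subrK.
by rewrite rpredD ?dvdz_mull // IHk // ltnW.
Qed.

(* Since [(-1)^k C(p-1, k) = 1 (mod p)], the binomial coefficients of
   [ad_x^(p-1)] agree with [1] up to the multiple [bin_defect p k] of [p]. *)
Definition bin_defect (p k : nat) : int := ((1 - (-1) ^+ k * 'C(p.-1, k)%:Z) %/ p%:Z)%Z.

Lemma bin_defectP p k : prime p -> (k < p)%N ->
  bin_defect p k * p%:Z = 1 - (-1) ^+ k * 'C(p.-1, k)%:Z.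
Proof. by move=> hp hk; rewrite /bin_defect divzK // prime_dvd_sign_bin. Qed.

Lemma sum_conj_exp_adn (S : pzRingType) (x y : S) p : prime p ->
  \sum_(k < p) x ^+ (p.-1 - k) * y * x ^+ k
    = adn x p.-1 y + (\sum_(k < p) (x ^+ (p.-1 - k) * y * x ^+ k) *~ bin_defect p k) *+ p.
Proof.
case: p => [|n] // hp; rewrite adn_binomial -sumrMnl -big_split /=.
apply: eq_bigr => k _; rewrite pmulrn -mulrzA bin_defectP //.
by rewrite mulrzBr mulr1z addrC subrK.
Qed.

Section Defect.
Variables (S : pzRingType) (r a : S).

Definition fexp_ar (k : nat) (L : seq term) : seq term := iter k (fmula \o fmulr) L.

Lemma feval_fexp_ar k L : feval r a (fexp_ar k L) = (a * r) ^+ k * feval r a L.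
Proof.
elim: k => [|k IHk]; first by rewrite expr0 mul1r.
by rewrite /= feval_fmula feval_fmulr IHk exprS !mulrA.
Qed.

Definition fdefect (p : nat) : seq term :=
  flatten [seq fscale (bin_defect p k) (fexp_ar (p.-1 - k) (fmula (fexp_ar k fone)))
          | k <- iota 0 p].

Lemma feval_fdefect p : feval r a (fdefect p)
  = \sum_(k < p) ((a * r) ^+ (p.-1 - k) * a * (a * r) ^+ k) *~ bin_defect p k.
Proof.
rewrite feval_flatten big_map -val_enum_ord big_map big_enum /=.
apply: eq_bigr => k _.
by rewrite feval_fscale feval_fexp_ar feval_fmula feval_fexp_ar feval_fone mulr1 mulrA.
Qed.

End Defect.

Lemma homog_fexp_ar d w k L :
  all (homog d w) L -> all (homog (d + k) (w + k)) (fexp_ar k L).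
Proof.
move=> hL; elim: k => [|k IHk]; first by rewrite !addn0.
by rewrite !addnS homog_fmula ?homog_fmulr.
Qed.

Lemma homog_fdefect p : all (homog p p.-1) (fdefect p).
Proof.
apply: all_flatten_homog => L /mapP [k]; rewrite mem_iota add0n => /andP [_ hk] ->.
apply: homog_fscale.
have := homog_fexp_ar (p.-1 - k) (homog_fmula (homog_fexp_ar k homog_fone)).
have hkp : (k <= p.-1)%N by rewrite -ltnS (ltn_predK hk).
by rewrite !add0n addSn subnKC // (ltn_predK hk).
Qed.

(* [ftaylor i L] collects the coefficient of [X^i] in [L] evaluated at
   [r + X]: the binomial expansion of [(r + X)^e] contributes
   [C(e, i) r^(e - i) X^i]. *)
Definition ftaylor (i : nat) (L : seq term) : seq term :=
  [seq (t.1.1 * 'C(t.2, i)%:Z, t.1.2, (t.2 - i)%N) | t <- L & (i <= t.2)%N].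

Lemma homog_ftaylor d w i L : all (homog d w) L -> all (homog d (w - i)) (ftaylor i L).
Proof.
move=> /allP hL; apply/allP => t /mapP [t']; rewrite mem_filter => /andP [hi /hL].
by move=> /andP [hd /eqP hw] ->; rewrite /homog /= hd -hw addnBA // eqxx.
Qed.

Lemma deriv_exp_nc (R : nzRingType) (q : {poly R}) n :
  (q ^+ n)^`() = \sum_(k < n) q ^+ (n.-1 - k) * q^`() * q ^+ k.
Proof.
elim: n => [|n IHn]; first by rewrite big_ord0 expr0 -polyC1 derivC.
rewrite exprS derivM IHn big_ord_recr /= subnn expr0 mul1r addrC mulr_sumr.
congr (_ + _); apply: eq_bigr => k _; rewrite !mulrA -exprS.
by have -> : (n.-1 - k).+1 = (n - k)%N by case: k => k /= hk; lia.
Qed.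

Section ShiftByX.
Variables (S : nzRingType) (r a : S).
Local Notation rX := (r%:P + 'X : {poly S}).
Local Notation aX := (a%:P : {poly S}).

Lemma ad_shift y : ad rX y%:P = (ad r y)%:P.
Proof.
rewrite /ad mulrDl mulrDr -!polyCM (commr_polyX y%:P) polyCB.
by rewrite opprD addrACA subrr addr0.
Qed.

Lemma adn_shift k y : adn rX k y%:P = (adn r k y)%:P.
Proof. by elim: k => [|k IHk] //; rewrite !adnS IHk ad_shift. Qed.

Lemma admon_shift s : admon rX aX s = (admon r a s)%:P.
Proof.
elim: s => [|k s IHs]; first by rewrite !admon_nil.
by rewrite !admon_cons IHs adn_shift polyCM.
Qed.

Lemma arcoef_shift n j : arcoef rX aX n j = (arcoef r a n j)%:P.
Proof.
elim: n j => [|n IHn] j; first by rewrite !arcoef0; case: eqP.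
rewrite !arcoefS IHn ad_shift.
by case: j => [|j]; rewrite ?add0r ?polyCM // IHn -!polyCM -polyCD.
Qed.

Lemma coef_shift_exp j i : (rX ^+ j)`_i = r ^+ (j - i) *+ 'C(j, i).
Proof.
elim: j i => [|j IHj] i; first by rewrite expr0 coefC; case: i.
rewrite exprSr mulrDr coefD coefMC coefMX IHj.
case: i => [|i] /=; first by rewrite !bin0 !mulr1n subn0 addr0 -exprSr.
rewrite binS mulrnDr subSS IHj; congr (_ + _).
have [hij|hji] := leqP i.+1 j; first by rewrite mulrnAl -exprSr subnSK.
by rewrite bin_small // mulr0n mul0r.
Qed.

Lemma coef_feval_shift i L : (feval rX aX L)`_i = feval r a (ftaylor i L).
Proof.
rewrite /feval /ftaylor coef_sum big_map big_filter [RHS]big_mkcond /=.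
have coefMz (q : {poly S}) (z : int) : (q *~ z)`_i = q`_i *~ z.
  exact: (raddfMz (coefp i)).
apply: eq_bigr => t _; rewrite coefMz admon_shift coefCM coef_shift_exp.
case: leqP => hi; first by rewrite mulrnAr pmulrn -mulrzA mulrC.
by rewrite bin_small // mulr0n mulr0 mul0rz.
Qed.

Lemma deriv_shift_exp n : (rX ^+ n)^`() = rX ^+ n.-1 *+ n.
Proof.
have drX : rX^`() = 1 by rewrite derivD derivC derivX add0r.
rewrite deriv_exp_nc drX (eq_bigr (fun _ => rX ^+ n.-1)) ?sumr_const ?card_ord // => k _.
by rewrite mulr1 -exprD subnK // -ltnS (leq_trans (ltn_ord k)) // leqSpred.
Qed.

Lemma ad_shift_ar y : GRing.comm a y -> ad (aX * rX) y%:P = (ad (a * r) y)%:P.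
Proof.
move=> hay; rewrite mulrDr -polyCM /ad mulrDl mulrDr opprD addrACA -!polyCM -polyCB.
by rewrite -[a%:P * 'X * _]mulrA -(commr_polyX y%:P) !mulrA -!polyCM hay subrr addr0.
Qed.

Lemma adn_shift_ar m : (forall k, GRing.comm a (adn (a * r) k a)) ->
  adn (aX * rX) m aX = (adn (a * r) m a)%:P.
Proof. by move=> ha; elim: m => [|m IHm] //; rewrite !adnS IHm ad_shift_ar. Qed.

Lemma deriv_exp_ar_shift n :
  ((aX * rX) ^+ n.+1)^`() = \sum_(j < n.+1) (arcoef r a n j)%:P * rX ^+ j *+ j.+1.
Proof.
rewrite exprSr mulrA exp_mul_ar mulr_suml raddf_sum; apply: eq_bigr => j _ /=.
by rewrite arcoef_shift -mulrA -exprSr derivM derivC mul0r add0r deriv_shift_exp mulrnAr.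
Qed.

Lemma taylor_identity_nz n i : prime n.+1 -> (0 < i)%N ->
  (forall m, GRing.comm a (adn (a * r) m a)) ->
  \sum_(j < n.+1) (arcoef r a n j * r ^+ (j - i)) *+ ('C(j, i) * j.+1)
    = feval r a (ftaylor i (fdefect n.+1)) *+ n.+1.
Proof.
move=> hp hi ha.
have dX : (aX * rX)^`() = aX.
  by rewrite derivM derivC mul0r add0r derivD derivC derivX add0r mulr1.
have := deriv_exp_nc (aX * rX) n.+1.
rewrite dX sum_conj_exp_adn // -feval_fdefect deriv_exp_ar_shift adn_shift_ar //=.
move=> /(congr1 (coefp i)) /=.
rewrite coef_sum coefD coefC (negbTE (lt0n_neq0 hi)) add0r coefMn coef_feval_shift => <-.
by apply: eq_bigr => j _; rewrite coefMn coefCM coef_shift_exp mulrnAr -mulrnA.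
Qed.

End ShiftByX.

(* Polynomials need a nontrivial coefficient ring; a pzRing with [1 != 0]
   is given that structure on an alias. *)
Definition nontrivial_alias (R : pzRingType) (_ : (1 : R) != 0) : Type := R.
HB.instance Definition _ (R : pzRingType) (h : (1 : R) != 0) :=
  GRing.PzRing.on (nontrivial_alias h).
HB.instance Definition _ (R : pzRingType) (h : (1 : R) != 0) :=
  GRing.PzSemiRing_isNonZero.Build (nontrivial_alias h) h.

Lemma taylor_identity (S : pzRingType) (r a : S) n i : prime n.+1 -> (0 < i)%N ->
  (forall m, GRing.comm a (adn (a * r) m a)) ->
  \sum_(j < n.+1) (arcoef r a n j * r ^+ (j - i)) *+ ('C(j, i) * j.+1)
    = feval r a (ftaylor i (fdefect n.+1)) *+ n.+1.
Proof.
have [h10 _ _ _|h10] := eqVneq (1 : S) 0.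
  by rewrite -[LHS]mulr1 -[RHS]mulr1 h10 !mulr0.
exact: (@taylor_identity_nz (nontrivial_alias h10)).
Qed.

Lemma bezout_mulrn (V : zmodType) (x y : V) (u v : int) m p :
  u * m%:Z + v * p%:Z = 1 -> x *+ m = y *+ p -> x = (y *~ u + x *~ v) *+ p.
Proof.
move=> huv hxy; rewrite -[LHS]mulr1z -huv mulrzDr (mulrC u) !mulrzA -pmulrn hxy.
by rewrite pmulrn mulrzAC -!pmulrn -mulrnDl.
Qed.

Lemma coprime_bezoutz m p : coprime m p -> exists u v : int, u * m%:Z + v * p%:Z = 1.
Proof.
move=> hmp; have [u [v huv]] := Bezoutz m%:Z p%:Z.
by exists u, v; rewrite huv; apply/eqP.
Qed.

(* Commutation of [a] with the [ad_(ar)^m(a)] is the only use of the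
   hypotheses on [A]. *)
Definition pmul_witness (n i : nat) (L : seq term) : Prop :=
  all (homog n.+1 (n - i)) L /\
  forall (S : pzRingType) (r a : S), (forall m, GRing.comm a (adn (a * r) m a)) ->
    arcoef r a n i = feval r a L *+ n.+1.

Section DescentStep.
Variables (n i : nat) (W : nat -> seq term).
Hypotheses (hp : prime n.+1) (hi0 : (0 < i)%N) (hin : (i < n)%N).
Hypothesis hW : forall j, (i < j < n)%N -> pmul_witness n j (W j).

(* [arcoef n n = a^p] is not a multiple of [p], but it enters the Taylor
   identity with the factor [n.+1]. *)
Let fhigher j := if j == n then farcoef n n else fscale j.+1%:Z (W j).

Let homog_fhigher j : (i < j <= n)%N -> all (homog n.+1 (n - j)) (fhigher j).
Proof.
rewrite /fhigher => /andP [hij hjn]; case: eqP => [-> | /eqP hjn'].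
  exact: homog_farcoef.
by apply: homog_fscale; apply: (hW _).1; rewrite hij ltn_neqAle hjn' hjn.
Qed.

Let feval_fhigher (S : pzRingType) (r a : S) j :
  (forall m, GRing.comm a (adn (a * r) m a)) -> (i < j <= n)%N ->
  arcoef r a n j *+ j.+1 = feval r a (fhigher j) *+ n.+1.
Proof.
rewrite /fhigher => ha /andP [hij hjn]; case: eqP => [-> // | /eqP hjn'].
rewrite feval_fscale -pmulrn mulrnAC -(hW _).2 //.
by rewrite hij ltn_neqAle hjn' hjn.
Qed.

Let fsolved : seq term :=
  ftaylor i (fdefect n.+1) ++
  fscale (-1) (flatten [seq fscale 'C(j, i)%:Z (fmulrX (j - i) (fhigher j))
                       | j <- index_iota i.+1 n.+1]).

Let homog_fsolved : all (homog n.+1 (n - i)) fsolved.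
Proof.
rewrite all_cat homog_ftaylor ?homog_fdefect //= homog_fscale //.
apply: all_flatten_homog => L /mapP [j]; rewrite mem_index_iota => hj ->.
have -> : (n - i = n - j + (j - i))%N by lia.
by rewrite homog_fscale // homog_fmulrX // homog_fhigher.
Qed.

Let feval_fsolved (S : pzRingType) (r a : S) :
  (forall m, GRing.comm a (adn (a * r) m a)) ->
  arcoef r a n i *+ i.+1 = feval r a fsolved *+ n.+1.
Proof.
move=> ha; have := taylor_identity hp hi0 ha.
rewrite -(big_mkord xpredT (fun j => (arcoef r a n j * r ^+ (j - i)) *+ ('C(j, i) * j.+1))).
rewrite (@big_cat_nat _ _ _ i) //=; last exact: leqW (ltnW hin).
rewrite big_nat big1 ?add0r => [|j /andP [_ hji]]; last by rewrite bin_small // mulr0n.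
rewrite big_ltn ?ltnS ?(ltnW hin) //= subnn expr0 mulr1 binn mul1n => hsum.
rewrite feval_cat feval_fscale feval_flatten big_map mulrN1z mulrnDl mulNrn -hsum.
rewrite [X in _ + X - _](eq_big_nat _ _ (F2 := fun j =>
    feval r a (fscale 'C(j, i) (fmulrX (j - i) (fhigher j))) *+ n.+1)).
  by rewrite sumrMnl addrK.
move=> j hj.
rewrite feval_fscale feval_fmulrX -pmulrn mulnC mulrnA -mulrnAl feval_fhigher //.
by rewrite mulrnAl mulrnAC.
Qed.

Lemma pmul_witness_step : exists L, pmul_witness n i L.
Proof.
have [u [v huv]] : exists u v : int, u * i.+1%:Z + v * n.+1%:Z = 1.
  by apply: coprime_bezoutz; rewrite coprime_sym prime_coprime // gtnNdvd.
exists (fscale u fsolved ++ fscale v (farcoef n i)); split.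
  by rewrite all_cat !homog_fscale ?homog_fsolved // homog_farcoef // ltnW.
move=> S r a ha.
by rewrite (bezout_mulrn huv (feval_fsolved ha)) feval_cat !feval_fscale.
Qed.

End DescentStep.

Lemma pmul_witness_all n : prime n.+1 ->
  exists W : nat -> seq term, forall j, (0 < j < n)%N -> pmul_witness n j (W j).
Proof.
move=> hp.
have descent k : exists W : nat -> seq term,
    forall j, (n - k <= j)%N -> (0 < j < n)%N -> pmul_witness n j (W j).
  elim: k => [|k [W hW]]; first by exists (fun=> [::]) => j hj hjn; lia.
  have [hk|hk] := posnP (n - k.+1).
    by exists W => j hj hjn; apply: hW => //; lia.
  have hkn : (n - k.+1 < n)%N by lia.
  have hW' j : (n - k.+1 < j < n)%N -> pmul_witness n j (W j).
    by move=> hj; apply: hW; lia.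
  have [L hL] := pmul_witness_step hp hk hkn hW'.
  exists (fun j => if j == (n - k.+1)%N then L else W j) => j hj hjn.
  by case: eqP => [-> // | hne]; apply: hW => //; lia.
by have [W hW] := descent n; exists W => j; apply: hW; rewrite subnn.
Qed.

Lemma exp_mul_ar_middle (S : pzRingType) (r a : S) n : (0 < n)%N ->
  (a * r) ^+ n * a - a ^+ n.+1 * r ^+ n - arcoef r a n 0
    = \sum_(1 <= j < n) arcoef r a n j * r ^+ j.
Proof.
move=> hn; rewrite exp_mul_ar -(arcoef_diag r).
rewrite -(big_mkord xpredT (fun j => arcoef r a n j * r ^+ j)).
by rewrite big_ltn // big_nat_recr //= expr0 mulr1 addrA addrK addrAC subrr add0r.
Qed.

Lemma comm_adn_mulr (R : pzRingType) (r : R) (A : {pred R}) a :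
  subring_closed A -> {in A &, forall x y, x * y = y * x} ->
  {in A, forall x, ad r x \in A} -> a \in A ->
  forall m, GRing.comm a (adn (a * r) m a).
Proof.
move=> hA hcomm had ha.
have adn_in m : adn (a * r) m a \in A.
  elim: m => [|m IHm] //; rewrite adnS.
  have -> : ad (a * r) (adn (a * r) m a) = a * ad r (adn (a * r) m a).
    by rewrite /ad mulrBr !mulrA (hcomm _ _ IHm ha).
  by case: hA => _ _ hM; apply: hM => //; apply: had.
by move=> m; apply: hcomm.
Qed.

Lemma nth_leq_sumn (s : seq nat) i : (nth 0 s i <= sumn s)%N.
Proof.
elim: s i => [|k s IHs] [|i] //=; first exact: leq_addr.
exact: leq_trans (IHs i) (leq_addl _ _).
Qed.

Definition ffun_of_seq n (s : seq nat) : {ffun 'I_n.+1 -> 'I_n.+1} :=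
  [ffun i : 'I_n.+1 => inord (nth 0%N s i)].

Lemma ffun_of_homog n (S : pzRingType) (r a : S) (t : term) : homog n.+1 n t ->
  let m := ffun_of_seq n t.1.2 in
  (\sum_(i < n.+1) (m i : nat) <= n)%N /\
  (\prod_(i < n.+1) adn r (m i) a) * r ^+ (n - \sum_(i < n.+1) (m i : nat))
    = admon r a t.1.2 * r ^+ t.2.
Proof.
move=> /andP [/eqP hs /eqP hw] m.
have hm (i : 'I_n.+1) : (m i : nat) = nth 0 t.1.2 i.
  rewrite ffunE inordK // ltnS; apply: leq_trans (nth_leq_sumn _ _) _.
  by rewrite -hw leq_addr.
have hsum : (\sum_(i < n.+1) (m i : nat) = sumn t.1.2)%N.
  by under eq_bigr do rewrite hm; rewrite sumnE (big_nth 0%N) hs big_mkord.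
have hexp : (n - sumn t.1.2 = t.2)%N by rewrite -hw addKn.
rewrite hsum hexp; split; first by rewrite -[X in (_ <= X)%N]hw leq_addr.
congr (_ * _).
by under eq_bigr do rewrite hm; rewrite /admon (big_nth 0%N) hs big_mkord.
Qed.

Lemma feval_ffun_sum n (L : seq term) : all (homog n.+1 n) L ->
  exists c : {ffun 'I_n.+1 -> 'I_n.+1} -> int, forall (S : pzRingType) (r a : S),
    feval r a L =
      \sum_(m : {ffun 'I_n.+1 -> 'I_n.+1} | (\sum_(i < n.+1) (m i : nat) <= n)%N)
        ((\prod_(i < n.+1) adn r (m i) a) * r ^+ (n - \sum_(i < n.+1) (m i : nat))) *~ c m.
Proof.
move=> /allP hL; exists (fun m => \sum_(t <- L | ffun_of_seq n t.1.2 == m) t.1.1) => S r a.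
under [RHS]eq_bigr do rewrite mulrz_sumr.
rewrite (exchange_big_dep xpredT) //= /feval; apply: eq_big_seq => t ht.
have [hm hmon] := ffun_of_homog r a (hL t ht).
rewrite (big_pred1 (ffun_of_seq n t.1.2)) ?hmon // => m /=.
by apply/andP/eqP => [[_ /eqP ->] | ->].
Qed.

Theorem lemma8p1 (p : nat) (hp : prime p) :
  exists c : {ffun 'I_p -> 'I_p} -> int,
    (forall m : {ffun 'I_p -> 'I_p},
        (\sum_(i < p) (m i : nat) <= p.-1)%N -> (p%:Z %| c m)%Z) /\
    forall (R : pzRingType) (r : R) (A : {pred R}),
      subring_closed A ->
      {in A &, forall x y, x * y = y * x} ->
      {in A, forall x, ad r x \in A} ->
      forall a, a \in A ->
        (a * r) ^+ p.-1 * a - a ^+ p * r ^+ p.-1 - adn (a * r) p.-1 a =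
        \sum_(m : {ffun 'I_p -> 'I_p} | (\sum_(i < p) (m i : nat) <= p.-1)%N)
          ((\prod_(i < p) adn r (m i) a) * r ^+ (p.-1 - \sum_(i < p) (m i : nat))) *~ c m.
Proof.
case: p hp => [|n] hp //=.
have n_gt0 : (0 < n)%N by case: n hp.
have [W hW] := pmul_witness_all hp.
pose L := flatten [seq fmulrX j (W j) | j <- index_iota 1 n].
have homogL : all (homog n.+1 n) L.
  apply: all_flatten_homog => K /mapP [j]; rewrite mem_index_iota => hj ->.
  have hjn : (j <= n)%N by case/andP: hj => _ /ltnW.
  by rewrite -[X in homog _ X](subnK hjn) homog_fmulrX // (hW j hj).1.
have [c hc] := feval_ffun_sum homogL.
exists (fun m => c m * n.+1%:Z); split => [m _ | R r A hA hcomm had a ha].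
  exact: dvdz_mull.
have ha' := comm_adn_mulr hA hcomm had ha.
under eq_bigr do rewrite mulrzA -pmulrn.
rewrite sumrMnl -hc -(arcoef0_adn n ha') exp_mul_ar_middle // /L feval_flatten big_map.
rewrite -sumrMnl; apply: eq_big_nat => j hj.
by rewrite feval_fmulrX -mulrnAl -(hW j hj).2.
Qed.
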